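(* Let $n\ge3$ and let $G=K_{1,n-1}$ be the uniform coloured star graph on vertices $1,\dots,n$ with centre $1$ (edges $\{1,j\}$, $j=2,\dots,n$), with associated linear space $\mathcal L$. Let $E$ be its edge set and $E^c$ the set of pairs $\{i,j\}$ of distinct vertices with $i,j\ge2$. Then $r=3$, $s=4$, and the vector space of linear forms in $I(\mathcal L^{-1})$ is spanned by $x_{22}-x_{ii}$ ($i=3,\dots,n$); $x_{12}-x_{ij}$ ($\{i,j\}\in E$); $x_{23}-x_{ij}$ ($\{i,j\}\in E^c$); and $x_{11}-(n-2)\,x_{n-1,n}-x_{nn}$.
   Context: For a simple graph $G$ on $V=\{1,\dots,n\}$, its uniform coloured version has one vertex colour and one edge colour, and its associated linear space is $\mathcal L=\{\lambda_1I_n+\lambda_2A_2:\lambda_1,\lambda_2\in\mathbb C\}\subseteq\mathbb S^n$, where $A_2$ is the 0/1 adjacency matrix of $G$. The reciprocal variety $\mathcal L^{-1}$ is the Zariski closure of $\{M^{-1}:M\in\mathcal L\text{ invertible}\}$, with vanishing ideal $I(\mathcal L^{-1})\subseteq\mathbb C[x_{ij}:1\le i\le j\le n]$, using $x_{ji}=x_{ij}$. Here $r$ is the number of distinct eigenvalues of $A_2$ and $s$ is the number of orbits of the automorphism group of $G$ acting on unordered pairs $\{i,j\}$ of (not necessarily distinct) vertices via $\{i,j\}\mapsto\{\sigma(i),\sigma(j)\}$. *)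

From HB Require Import structures.
From mathcomp Require Import all_boot all_order fingroup perm all_algebra.
Set Implicit Arguments. Unset Strict Implicit. Unset Printing Implicit Defensive.
Import Order.TTheory GRing.Theory Num.Theory.
Local Open Scope ring_scope.

(* Vertices 1..n of the paper are the ordinals 0..n-1 of 'I_n:
   paper vertex k  <->  ordinal with value k-1. *)

Definition star_rel (n : nat) : rel 'I_n :=
  fun i j => ((val i == 0%N) && (val j != 0%N)) || ((val j == 0%N) && (val i != 0%N)).

Arguments star_rel n : clear implicits.

Definition adj_mx (C : nzRingType) (n : nat) (e : rel 'I_n) : 'M[C]_n :=
  \matrix_(i, j) (e i j)%:R.

Definition num_distinct_eigs (C : fieldType) (n : nat) (A : 'M[C]_n) (k : nat) : Prop :=
  exists s : seq C, [/\ uniq s, forall a, (a \in s) = eigenvalue A a & size s = k].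

Definition autG (n : nat) (e : rel 'I_n) : {set {perm 'I_n}} :=
  [set s : {perm 'I_n} | [forall i, forall j, e (s i) (s j) == e i j]].

Definition upairs (n : nat) : {set {set 'I_n}} :=
  [set S : {set 'I_n} | (0 < #|S| <= 2)%N].

Definition pair_orbit (n : nat) (e : rel 'I_n) (S : {set 'I_n}) : {set {set 'I_n}} :=
  [set [set (s : {perm 'I_n}) x | x in S] | s in autG e].

Definition num_pair_orbits (n : nat) (e : rel 'I_n) : nat :=
  #|[set pair_orbit e S | S in upairs n]|.

Definition inL (C : nzRingType) (n : nat) (A : 'M[C]_n) (M : 'M[C]_n) : Prop :=
  exists l1 l2 : C, M = l1%:M + l2 *: A.

(* variables x_ij, i <= j *)
Definition upair (n : nat) := {p : 'I_n * 'I_n | (val p.1 <= val p.2)%N}.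

(* linear forms in C[x_ij : i <= j], represented by their coefficient vectors *)
Notation linform C n := {ffun upair n -> C^o}.

(* the linear form x_ij (paper labels i, j in 1..n; x_ji = x_ij) *)
Definition xv (C : nzRingType) (n : nat) (i j : nat) : linform C n :=
  [ffun p : upair n =>
     (((val (val p).1).+1 == i) && ((val (val p).2).+1 == j)
      || ((val (val p).1).+1 == j) && ((val (val p).2).+1 == i))%:R].

Definition lin_eval (C : nzRingType) (n : nat) (c : linform C n) (X : 'M[C]_n) : C :=
  \sum_(p : upair n) c p * X (val p).1 (val p).2.

(* the linear form c lies in I(L^{-1}): it vanishes on every M^{-1}, M in L
   invertible (a polynomial vanishes on a set iff it vanishes on its
   Zariski closure) *)
Definition in_recip_ideal (C : fieldType) (n : nat) (A : 'M[C]_n) (c : linform C n) : Prop :=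
  forall M : 'M[C]_n, inL A M -> M \in unitmx -> lin_eval c (invmx M) = 0.

Definition Estar (n : nat) : seq (nat * nat) := [seq (1%N, j) | j <- iota 2 n.-1].
Definition Ecstar (n : nat) : seq (nat * nat) :=
  [seq (i, j) | i <- iota 2 n.-1, j <- iota i.+1 (n - i)].

Definition star_gens (C : fieldType) (n : nat) : seq (linform C n) :=
  [seq xv C n 2 2 - xv C n i i | i <- iota 3 (n - 2)]
  ++ [seq xv C n 1 2 - xv C n p.1 p.2 | p <- Estar n]
  ++ [seq xv C n 2 3 - xv C n p.1 p.2 | p <- Ecstar n]
  ++ [:: xv C n 1 1 - (n - 2)%:R *: xv C n n.-1 n - xv C n n n].

From HB Require Import structures.
From mathcomp Require Import all_boot all_order fingroup perm all_algebra.
From mathcomp Require Import ring zify.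
Import Order.TTheory GRing.Theory Num.Theory.
Local Open Scope ring_scope.
Set Implicit Arguments. Unset Strict Implicit. Unset Printing Implicit Defensive.

(* The whole argument rests on the identity
   A^3 = (n-1) A (star_cube).
   - Spectrum: an eigenvalue a satisfies a^3 = (n-1) a, and 0, +-sqrt(n-1)
     all occur (explicit eigenvectors), so r = 3.
   - Orbits: Aut(G) is the stabiliser of the centre; an orbit of unordered
     pairs is determined by (centre in the pair?, size of the pair), giving
     the four orbits {1}, {j}, {1,j}, {i,j}, so s = 4.
   - Ideal: by A^3 = (n-1) A the inverse of an invertible pencil is again a
     combination a I + b A + g A^2 (star_poly, star_pencil_inv); invertibility
     forces the hypotheses of that formula (pencil_unit_cond, via explicit
     kernel vectors).  Every listed generator vanishes on every star_poly, so
     their span lies in I(L^-1).  Conversely every linear form is, modulo that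
     span, a combination of x12, x22, x23, and evaluating such a combination at
     the inverses of I and of I +- A shows that it is zero. *)

Section LinearForms.
Variables (C : nzRingType) (n : nat).
Local Notation lf := (linform C n).

Lemma lin_evalD (c1 c2 : lf) X : lin_eval (c1 + c2) X = lin_eval c1 X + lin_eval c2 X.
Proof. by rewrite /lin_eval -big_split; apply: eq_bigr => p _; rewrite ffunE mulrDl. Qed.

Lemma lin_evalZ k (c : lf) X : lin_eval (k *: c) X = k * lin_eval c X.
Proof. by rewrite /lin_eval mulr_sumr; apply: eq_bigr => p _; rewrite ffunE mulrA. Qed.

Lemma lin_evalB (c1 c2 : lf) X : lin_eval (c1 - c2) X = lin_eval c1 X - lin_eval c2 X.
Proof. by rewrite lin_evalD -scaleN1r lin_evalZ mulN1r. Qed.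

Lemma lin_eval_sum I (r : seq I) (F : I -> lf) X :
  lin_eval (\sum_(i <- r) F i) X = \sum_(i <- r) lin_eval (F i) X.
Proof.
rewrite /lin_eval exchange_big /=; apply: eq_bigr => p _.
by rewrite sum_ffunE mulr_suml.
Qed.
End LinearForms.

Section CoordinateForms.
Variables (C : nzRingType) (n : nat).
Local Notation lf := (linform C n).

Definition coord_form (p : upair n) : lf := xv C n (val p).1.+1 (val p).2.+1.

Lemma coord_formE (p q : upair n) : coord_form p q = (q == p)%:R.
Proof.
rewrite ffunE; case: p q => [[i j] /= le_ij] [[i' j'] /= le_ij'].
rewrite !eqSS -val_eqE /= xpair_eqE orb_idr // => /andP [/eqP Ei' /eqP Ej'].
rewrite Ei' Ej' in le_ij' *.
have -> : (j : nat) = i by apply/eqP; rewrite eqn_leq le_ij'.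
by rewrite eqxx.
Qed.

Lemma lin_eval_coord (p : upair n) X : lin_eval (coord_form p) X = X (val p).1 (val p).2.
Proof.
rewrite /lin_eval (eq_bigr (fun q => if q == p then X (val q).1 (val q).2 else 0)).
  by rewrite -big_mkcond big_pred1_eq.
by move=> q _; rewrite coord_formE; case: eqP => _; rewrite ?mul1r ?mul0r.
Qed.

Lemma linform_decomp (c : lf) : c = \sum_(p : upair n) c p *: coord_form p.
Proof.
apply/ffunP => q; rewrite sum_ffunE (bigD1 q) //= big1 ?addr0.
  by rewrite ffunE coord_formE eqxx; symmetry; apply: mulr1.
by move=> p Hp; rewrite ffunE coord_formE eq_sym (negbTE Hp); apply: mulr0.
Qed.

Lemma lin_eval_xv (i j : 'I_n) X : (i <= j)%N -> lin_eval (xv C n i.+1 j.+1) X = X i j.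
Proof. by move=> le_ij; apply: (lin_eval_coord (exist _ (i, j) le_ij)). Qed.
End CoordinateForms.

Section StarAdjacency.
Variables (C : comNzRingType) (l : nat).
Local Notation n := l.+1.
Local Notation A := (adj_mx C (star_rel n)).

Lemma star_adjE (i j : 'I_n) : A i j = (((i : nat) == 0%N) != ((j : nat) == 0%N))%:R.
Proof. by rewrite mxE /star_rel; case: ((i : nat) == 0%N); case: ((j : nat) == 0%N). Qed.

Lemma star_adj_leaf (k : 'I_l) (j : 'I_n) : A (lift ord0 k) j = ((j : nat) == 0%N)%:R.
Proof. by rewrite star_adjE lift0; case: ((j : nat) == 0%N). Qed.

Lemma star_adj_tr : A^T = A.
Proof. by apply/matrixP => i j; rewrite mxE !star_adjE eq_sym. Qed.

Lemma star_mulmx p (Y : 'M[C]_(n, p)) (i : 'I_n) c : (A *m Y) i c =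
  if (i : nat) == 0%N then \sum_(k < l) Y (lift ord0 k) c else Y ord0 c.
Proof.
rewrite mxE big_ord_recl star_adjE /=.
have [i0|i0] := eqVneq (i : nat) 0%N; rewrite ?i0 /=.
  by rewrite mul0r add0r; apply: eq_bigr => k _; rewrite star_adjE i0 mul1r.
rewrite mul1r big1 ?addr0 // => k _.
by rewrite star_adjE (negbTE i0) mul0r.
Qed.

Lemma mulmx_star p (Y : 'M[C]_(p, n)) r (j : 'I_n) : (Y *m A) r j =
  if (j : nat) == 0%N then \sum_(k < l) Y r (lift ord0 k) else Y r ord0.
Proof.
transitivity ((A *m Y^T) j r); first by rewrite -{2}star_adj_tr -trmx_mul [RHS]mxE.
by rewrite star_mulmx; case: ifP => _; rewrite ?mxE //; apply: eq_bigr => k _; rewrite mxE.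
Qed.

Lemma star_sqrE (i j : 'I_n) : (A *m A) i j =
  if (i : nat) == 0%N then ((j : nat) == 0%N)%:R * l%:R else ((j : nat) != 0%N)%:R.
Proof.
rewrite star_mulmx; case: ifP => _; last by rewrite star_adjE.
rewrite (eq_bigr (fun _ => ((j : nat) == 0%N)%:R)) ?sumr_const ?card_ord ?mulr_natr //.
by move=> k _; rewrite star_adj_leaf.
Qed.

(* The key identity A^3 = l A (the minimal polynomial of A is X (X^2 - l)). *)
Lemma star_cube : A *m (A *m A) = l%:R *: A.
Proof.
apply/matrixP => i j; rewrite star_mulmx [RHS]mxE star_adjE.
under eq_bigr do rewrite star_sqrE lift0 /=.
rewrite star_sqrE sumr_const card_ord /=.
by case: eqP => _; case: eqP => _; rewrite /= ?mulr0 ?mulr1 ?mul0r ?mul1r ?mul0rn.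
Qed.

(* The matrices a I + b A + g A^2; they form the algebra C[A]. *)
Definition star_poly (a b g : C) : 'M[C]_n := a%:M + b *: A + g *: (A *m A).

(* Entries of a I + b A + g A^2: constant on each of the four orbits of pairs. *)
Lemma star_polyE a b g (i j : 'I_n) : star_poly a b g i j =
  if (i : nat) == 0%N then (if (j : nat) == 0%N then a + l%:R * g else b)
  else if (j : nat) == 0%N then b else if i == j then a + g else g.
Proof.
rewrite /star_poly !(star_sqrE, mxE) /star_rel.
have [i0|i0] := eqVneq (i : nat) 0%N; have [j0|j0] := eqVneq (j : nat) 0%N;
  rewrite ?i0 ?j0 /=.
- by rewrite (_ : i == j) ?(mulr0, addr0, mul1r) 1?mulrC // -val_eqE /= i0 j0.
- have /negbTE -> : i != j by rewrite -val_eqE /= i0 eq_sym.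
  by rewrite ?(mulr0n, mul0r, mulr0, mulr1, add0r, addr0).
- have /negbTE -> : i != j by rewrite -val_eqE /= j0.
  by rewrite ?(mulr0n, mul0r, mulr0, mulr1, add0r, addr0).
by case: eqP => _; rewrite ?(mulr0n, mulr1n, mul0r, mulr0, mulr1, add0r, addr0).
Qed.

Lemma star_poly1 : star_poly 1 0 0 = 1%:M.
Proof. by rewrite /star_poly !scale0r !addr0. Qed.

(* Product of a pencil element with an element of C[A], reducing A^3 by star_cube. *)
Lemma star_pencil_mul (l1 l2 a b g : C) : (l1%:M + l2 *: A) *m star_poly a b g =
  star_poly (l1 * a) (l1 * b + l2 * a + l2 * g * l%:R) (l1 * g + l2 * b).
Proof.
rewrite /star_poly mulmxDl !mulmxDr !mul_scalar_mx -!scalemxAl !mul_mx_scalar.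
rewrite -!scalemxAr star_cube !scalerA !scale_scalar_mx !scalerDl.
by apply/matrixP => i j; rewrite !mxE; ring.
Qed.
End StarAdjacency.

Section StarInverse.
Variables (C : fieldType) (l : nat).
Local Notation n := l.+1.
Local Notation A := (adj_mx C (star_rel n)).
Local Notation pencil l1 l2 := (l1%:M + l2 *: A).

(* If l1 != 0 and l1^2 != l l2^2, the pencil element l1 I + l2 A is
   invertible with inverse in C[A], given by solving star_pencil_mul = I. *)
Lemma star_pencil_inv (l1 l2 : C) : l1 != 0 -> l1 ^+ 2 != l%:R * l2 ^+ 2 ->
  let D := l1 ^+ 2 - l%:R * l2 ^+ 2 in
  pencil l1 l2 \in unitmx /\
  invmx (pencil l1 l2) = star_poly l l1^-1 (- l2 / D) (l2 ^+ 2 / (l1 * D)).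
Proof.
move=> l1_neq0 D_neq0 D; have {}D_neq0 : D != 0 by rewrite subr_eq0.
set Y := star_poly _ _ _ _.
have MY : pencil l1 l2 *m Y = 1%:M.
  by rewrite -star_poly1 star_pencil_mul /D; congr star_poly; field; rewrite ?l1_neq0 ?D_neq0.
have [uM _] := mulmx1_unit MY.
by split=> //; rewrite -[Y](mulKmx uM) MY mulmx1.
Qed.
End StarInverse.

Section StarSpectrum.
Variables (C : fieldType) (m : nat).
Local Notation l := m.+2.
Local Notation n := m.+3.
Local Notation A := (adj_mx C (star_rel n)).
Local Notation pencil l1 l2 := (l1%:M + l2 *: A).

Definition leaf_diff : 'rV[C]_n := \row_j (((j : nat) == 1%N)%:R - ((j : nat) == 2%N)%:R).

Lemma leaf_diff_neq0 : leaf_diff != 0.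
Proof.
apply/eqP => /rowP /(_ (lift ord0 ord0)); rewrite !mxE /= subr0 => /eqP.
by rewrite oner_eq0.
Qed.

Lemma leaf_diff_null : leaf_diff *m A = 0.
Proof.
apply/rowP => j; rewrite mulmx_star !mxE.
case: eqP => _; last by rewrite subrr.
rewrite !big_ord_recl big1 => [|k _]; last by rewrite mxE subrr.
by rewrite !mxE /= subr0 sub0r addr0 addrN.
Qed.

Lemma mulmx_pencil k (v : 'M[C]_(k, n)) l1 l2 :
  v *m pencil l1 l2 = l1 *: v + l2 *: (v *m A).
Proof. by rewrite mulmxDr mul_mx_scalar -scalemxAr. Qed.

(* Converse of star_pencil_inv: an invertible pencil element has l1 != 0
   (else leaf_diff is in its kernel) and l1^2 != l l2^2 (else the row
   (-l1, l2, ..., l2) is in its kernel). *)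
Lemma pencil_unit_cond l1 l2 : pencil l1 l2 \in unitmx ->
  l1 != 0 /\ l1 ^+ 2 != l%:R * l2 ^+ 2.
Proof.
move=> uM.
have null_row (v : 'rV[C]_n) : v *m pencil l1 l2 = 0 -> v = 0.
  by move=> vM0; rewrite -(mulmxK uM v) vM0 mul0mx.
have l1_neq0 : l1 != 0.
  apply: contraNneq leaf_diff_neq0 => l1_0; apply/eqP/null_row.
  by rewrite mulmx_pencil leaf_diff_null l1_0 scale0r scaler0 addr0.
split=> //; apply: contra l1_neq0 => /eqP D0.
pose w : 'rV[C]_n := \row_j (if (j : nat) == 0%N then - l1 else l2).
have /rowP /(_ ord0) : w = 0.
  apply: null_row; apply/rowP => j.
  rewrite mulmx_pencil mxE [X in _ + X]mxE [X in X + _]mxE mulmx_star !mxE /=.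
  case: eqP => _; last by rewrite mulrN mulrC subrr.
  under eq_bigr do rewrite mxE /=.
  by rewrite sumr_const card_ord -mulr_natl mulrN mulrCA -!expr2 D0 addNr.
by rewrite !mxE /= => /eqP; rewrite oppr_eq0.
Qed.

Lemma star_eigenvalue a : eigenvalue A a = (a == 0) || (a ^+ 2 == l%:R).
Proof.
apply/eigenvalueP/idP => [[v vA v_neq0] | ].
  have : (a * (l%:R - a ^+ 2)) *: v = 0.
    have vA3 : v *m (A *m (A *m A)) = a ^+ 3 *: v.
      rewrite !mulmxA vA -!scalemxAl vA -scalemxAl vA !scalerA.
      by rewrite -!expr2 -exprSr.
    move: vA3; rewrite star_cube -scalemxAr vA scalerA => /eqP.
    by rewrite -subr_eq0 -scalerBl mulrBr -exprS mulrC => /eqP.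
  move=> /eqP; rewrite scaler_eq0 (negbTE v_neq0) orbF mulf_eq0 subr_eq0.
  by rewrite [l%:R == _]eq_sym.
case/orP => [/eqP-> | /eqP a2].
  by exists leaf_diff; rewrite ?leaf_diff_null ?scale0r ?leaf_diff_neq0.
exists (\row_j (if (j : nat) == 0%N then a else 1)); last first.
  by apply/eqP => /rowP /(_ (lift ord0 ord0)); rewrite !mxE /= => /eqP; rewrite oner_eq0.
apply/rowP => j; rewrite mulmx_star !mxE.
case: eqP => _ /=; last by rewrite mulr1.
by under eq_bigr do rewrite mxE /=; rewrite sumr_const card_ord -a2 expr2.
Qed.

Lemma invmx_pencil l1 l2 : pencil l1 l2 \in unitmx ->
  exists a b g, invmx (pencil l1 l2) = star_poly l a b g.
Proof.
move=> uM; have [l1_neq0 D_neq0] := pencil_unit_cond uM.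
by have [_ ->] := star_pencil_inv l1_neq0 D_neq0; do 3 eexists.
Qed.
End StarSpectrum.

(* r = 3: the eigenvalues 0, sqrt(n-1), -sqrt(n-1) are distinct in characteristic 0. *)
Lemma star_num_eigs (C : numClosedFieldType) m :
  num_distinct_eigs (adj_mx C (star_rel m.+3)) 3.
Proof.
pose r : C := sqrtC (m.+2)%:R.
have r2 : r ^+ 2 = (m.+2)%:R by rewrite sqrtCK.
have r_neq0 : r != 0 by rewrite -sqrf_eq0 r2 pnatr_eq0.
have r_neqN : r != - r by rewrite -addr_eq0 -mulr2n mulrn_eq0 (negbTE r_neq0).
exists [:: 0; r; - r]; split.
- by rewrite /= !inE negb_or eq_sym r_neq0 eq_sym oppr_eq0 r_neq0 r_neqN.
- by move=> a; rewrite star_eigenvalue !inE -r2 eqf_sqr.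
- by [].
Qed.

Section StarIdeal.
Variables (C : numFieldType) (m : nat).
Local Notation l := m.+2.
Local Notation n := m.+3.
Local Notation A := (adj_mx C (star_rel n)).
Local Notation x i j := (xv C n i j).

Lemma lin_eval_star_poly a b g i j : (0 < i <= j)%N -> (j <= n)%N ->
  lin_eval (x i j) (star_poly l a b g) =
  if i == 1%N then (if j == 1%N then a + l%:R * g else b)
  else if i == j then a + g else g.
Proof.
case: i j => [|i] [|j] //= le_ij lt_jn.
have lt_in : (i < n)%N by apply: leq_trans lt_jn.
have := @lin_eval_xv C n (inord i) (inord j) (star_poly l a b g).
rewrite !inordK // star_polyE => -> //; rewrite !inordK // !eqSS.
case: i le_ij lt_in => [|i] le_ij lt_in; first by case: j {lt_jn le_ij}.
by case: j le_ij lt_jn => // j le_ij lt_jn; rewrite -val_eqE /= !inordK.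
Qed.

Lemma star_gens_diag i : (3 <= i <= n)%N -> x 2 2 - x i i \in star_gens C n.
Proof.
move=> le_i; rewrite mem_cat; apply/orP; left.
by apply/mapP; exists i; rewrite // mem_iota; lia.
Qed.

Lemma star_gens_edge j : (2 <= j <= n)%N -> x 1 2 - x 1 j \in star_gens C n.
Proof.
move=> le_j; rewrite !mem_cat; apply/orP; right; apply/orP; left.
by apply/mapP; exists (1%N, j) => //; apply/mapP; exists j; rewrite // mem_iota; lia.
Qed.

Lemma star_gens_nonedge i j : (2 <= i < j)%N -> (j <= n)%N ->
  x 2 3 - x i j \in star_gens C n.
Proof.
move=> le_ij le_jn; rewrite !mem_cat; apply/orP; right; apply/orP; right; apply/orP; left.
apply/mapP; exists (i, j) => //; apply/allpairsPdep; exists i, j.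
by rewrite !mem_iota; split=> //; lia.
Qed.

Lemma star_gens_centre : x 1 1 - m.+1%:R *: x l n - x n n \in star_gens C n.
Proof. by rewrite !mem_cat mem_seq1 (_ : (n - 2)%N = m.+1) ?eqxx ?orbT //; lia. Qed.

Lemma star_gens_vanish a b g c : c \in star_gens C n -> lin_eval c (star_poly l a b g) = 0.
Proof.
rewrite !mem_cat => /or4P [].
- case/mapP => i; rewrite mem_iota => /andP [le3i lein] ->.
  rewrite lin_evalB !lin_eval_star_poly //; last by lia.
  by rewrite /= ifN ?eqxx ?subrr //; lia.
- case/mapP => p /mapP [j]; rewrite mem_iota => /andP [le2j lejn] -> ->.
  by rewrite lin_evalB !lin_eval_star_poly //= ?ifN ?subrr //; lia.
- case/mapP => p /allpairsPdep [i [j [Hi Hj ->]]] ->; move: Hi Hj; rewrite !mem_iota.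
  move=> /andP [le2i lein] /andP [ltij lejn].
  rewrite lin_evalB !lin_eval_star_poly //=; try lia.
  by rewrite !ifN ?subrr //; lia.
rewrite mem_seq1 => /eqP ->.
rewrite !lin_evalB lin_evalZ !lin_eval_star_poly //= ?eqxx ?ifN //; try lia.
have -> : (m.+3 - 2)%N = m.+1 by lia.
by rewrite -[m.+2]addn1 natrD; ring.
Qed.

Lemma span_gens_recip c : c \in <<star_gens C n>>%VS -> in_recip_ideal A c.
Proof.
move=> c_in M [l1 [l2 ->]] uM.
have [a [b [g ->]]] := invmx_pencil uM.
rewrite (coord_span (X := in_tuple (star_gens C n)) c_in) lin_eval_sum big1 // => i _.
by rewrite lin_evalZ star_gens_vanish ?mulr0 // mem_nth.
Qed.

Lemma recip_idealB c1 c2 :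
  in_recip_ideal A c1 -> in_recip_ideal A c2 -> in_recip_ideal A (c1 - c2).
Proof. by move=> h1 h2 M LM uM; rewrite lin_evalB h1 ?h2 ?subrr. Qed.

(* Forms outside the span of the generators reduce to combinations of these. *)
Local Notation residual := [:: x 1 2; x 2 2; x 2 3].

(* A combination k0 x12 + k1 x22 + k2 x23 in I(L^-1) is zero: evaluating at
   I^-1 gives k1 = 0, at (I + t A)^-1 with t^2 = 1 gives k2 = t k0. *)
Lemma residual_recip_eq0 w : w \in <<residual>>%VS -> in_recip_ideal A w -> w = 0.
Proof.
move=> w_in; have [k0 [k1 [k2 ->]]] :
    exists k0 k1 k2, w = k0 *: x 1 2 + k1 *: x 2 2 + k2 *: x 2 3.
  rewrite (coord_span (X := in_tuple residual) w_in) !big_ord_recl big_ord0 addr0 addrA.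
  by do 3 eexists.
move=> {w_in} v_recip; set v := _ + _ in v_recip *.
have v_eval a b g : lin_eval v (star_poly l a b g) = k0 * b + k1 * (a + g) + k2 * g.
  by rewrite !lin_evalD !lin_evalZ !lin_eval_star_poly.
have k1_0 : k1 = 0.
  have L1 : inL A 1%:M by exists 1, 0; rewrite scale0r addr0.
  have := v_recip _ L1 (unitmx1 _ _); rewrite invmx1 -star_poly1 v_eval.
  by rewrite !mulr0 add0r !addr0 mulr1.
have k2E t : t ^+ 2 = 1 -> k2 = t * k0.
  move=> t2; set D : C := 1 - l%:R.
  have D_neq0 : D != 0 by rewrite subr_eq0 eq_sym pnatr_eq1.
  have cond : (1 : C) ^+ 2 != l%:R * t ^+ 2 by rewrite t2 mulr1 expr1n eq_sym pnatr_eq1.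
  have [uM invE] := star_pencil_inv (oner_neq0 C) cond.
  have := v_recip _ (ex_intro _ 1 (ex_intro _ t erefl)) uM.
  rewrite invE v_eval k1_0 mul0r addr0 t2 expr1n mulr1 -/D => eq0.
  apply/eqP; rewrite -subr_eq0; apply/eqP.
  have -> : k2 - t * k0 = (k0 * (- t / D) + k2 * (1 / (1 * D))) * D by field.
  by rewrite eq0 mul0r.
have k0_0 : k0 = 0.
  have h1 := k2E 1 (expr1n _ _); have h2 := k2E (-1) (etrans (sqrrN _) (expr1n _ _)).
  have : k0 *+ 2 = 0 by rewrite mulr2n -{1}(mul1r k0) -h1 h2 mulN1r addNr.
  by move/eqP; rewrite mulrn_eq0 => /eqP.
have k2_0 : k2 = 0 by rewrite (k2E 1 (expr1n _ _)) k0_0 mulr0.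
by rewrite /v k0_0 k1_0 k2_0 !scale0r !addr0.
Qed.

Lemma xv_in_span i j : (0 < i <= j)%N -> (j <= n)%N ->
  x i j \in <<star_gens C n ++ residual>>%VS.
Proof.
move=> le_ij le_jn; set V := <<_>>%VS.
have gen c : c \in star_gens C n -> c \in V by move=> c_in; rewrite memv_span // mem_cat c_in.
have res c : c \in residual -> c \in V by move=> c_in; rewrite memv_span // mem_cat c_in orbT.
have sub u w : u \in V -> u - w \in V -> w \in V.
  by move=> u_in uw_in; rewrite -[w]opprK -[- w](addKr u) opprD opprK memvB.
have diag k : (2 <= k <= n)%N -> x k k \in V.
  move=> le_k; have [-> | ne2] := eqVneq k 2%N; first by rewrite res ?inE ?eqxx ?orbT.
  apply: (sub (x 2 2)); first by rewrite res ?inE ?eqxx ?orbT.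
  by rewrite gen ?star_gens_diag //; lia.
have nonedge k k' : (2 <= k < k')%N -> (k' <= n)%N -> x k k' \in V.
  move=> le_kk' le_k'n; apply: (sub (x 2 3)); first by rewrite res ?inE ?eqxx ?orbT.
  by rewrite gen ?star_gens_nonedge.
have [i1 | ne1] := eqVneq i 1%N; last first.
  by have [<- | ne_ij] := eqVneq i j; [apply: diag | apply: nonedge]; lia.
rewrite i1; have [-> | ne1] := eqVneq j 1%N; last first.
  apply: (sub (x 1 2)); first by rewrite res ?inE ?eqxx.
  by rewrite gen ?star_gens_edge //; lia.
have -> : x 1 1 = (x 1 1 - m.+1%:R *: x l n - x n n) + m.+1%:R *: x l n + x n n.
  by rewrite addrAC !subrK.
apply: memvD; [apply: memvD | apply: diag; lia].
  exact: gen star_gens_centre.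
by apply/memvZ/nonedge; lia.
Qed.

Lemma recip_in_span c : in_recip_ideal A c -> c \in <<star_gens C n>>%VS.
Proof.
move=> c_recip; have : c \in <<star_gens C n ++ residual>>%VS.
  rewrite (linform_decomp c); apply: memv_suml => -[[i j] le_ij] _.
  by apply/memvZ/xv_in_span.
rewrite span_cat => /memv_addP [u u_in [w w_in c_uw]].
have w_recip : in_recip_ideal A w.
  by have := recip_idealB c_recip (span_gens_recip u_in); rewrite c_uw [u + w]addrC addrK.
by rewrite c_uw (residual_recip_eq0 w_in w_recip) addr0.
Qed.
End StarIdeal.

Section StarOrbits.
Variable m : nat.
Local Notation n := m.+3.
Local Notation e := (star_rel n).
Local Notation leaf1 := (lift ord0 (ord0 : 'I_m.+2)).
Local Notation leaf2 := (lift ord0 (lift ord0 (ord0 : 'I_m.+1))).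

Fact leaf1_neq0 : (leaf1 : nat) != 0%N. Proof. by []. Qed.
Fact leaf2_neq0 : (leaf2 : nat) != 0%N. Proof. by []. Qed.

Lemma centre_fixed_eq0 (s : {perm 'I_n}) i :
  s ord0 = ord0 -> ((s i : nat) == 0%N) = ((i : nat) == 0%N).
Proof.
by move=> s0; have := inj_eq (@perm_inj _ s) i ord0; rewrite s0 -!val_eqE.
Qed.

(* The automorphisms of the star are the permutations fixing the centre
   (two leaves cannot both be mapped to the centre). *)
Lemma autG_star (s : {perm 'I_n}) : (s \in autG e) = (s ord0 == ord0).
Proof.
apply/idP/eqP => [| s0]; last first.
  rewrite inE; apply/forallP => i; apply/forallP => j.
  by rewrite /star_rel !centre_fixed_eq0.
rewrite inE => /forallP aut_s; apply/val_inj/eqP/negPn/negP => s0_leaf.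
have leaf_to_centre (j : 'I_n) : (j : nat) != 0%N -> s j = ord0.
  move=> j_leaf; apply/val_inj/eqP; have /forallP /(_ j) /eqP := aut_s ord0.
  by rewrite /star_rel /= j_leaf (negbTE s0_leaf) andbT.
have /perm_inj : s leaf1 = s leaf2 by rewrite !leaf_to_centre.
by move/(congr1 val).
Qed.

Lemma autG_tperm (a b : 'I_n) :
  (a : nat) != 0%N -> (b : nat) != 0%N -> tperm a b \in autG e.
Proof.
by move=> a_leaf b_leaf; rewrite autG_star tpermD // -val_eqE /= eq_sym.
Qed.

Lemma pair_orbit_shift (t : {perm 'I_n}) (S : {set 'I_n}) : t \in autG e ->
  pair_orbit e (t @: S) = pair_orbit e S.
Proof.
rewrite autG_star => /eqP t0.
have t0V : t^-1%g ord0 = ord0 by rewrite -{1}t0 permK.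
apply/setP => X; apply/imsetP/imsetP => -[s s_aut ->]; rewrite autG_star in s_aut.
  exists (t * s)%g; first by rewrite autG_star permM t0.
  by rewrite -imset_comp; apply: eq_imset => x; rewrite /= permM.
exists (t^-1 * s)%g; first by rewrite autG_star permM t0V.
by rewrite -imset_comp; apply: eq_imset => x; rewrite /= permM permK.
Qed.

Lemma pair_orbit_invariants (S X : {set 'I_n}) : X \in pair_orbit e S ->
  (ord0 \in X) = (ord0 \in S) /\ #|X| = #|S|.
Proof.
case/imsetP => s; rewrite autG_star => /eqP s0 ->; split.
  by rewrite -{1}s0 (mem_imset _ _ (@perm_inj _ s)).
exact/card_imset/perm_inj.
Qed.

Lemma pair_orbit_self (S : {set 'I_n}) : S \in pair_orbit e S.
Proof.
apply/imsetP; exists 1%g; first by rewrite autG_star perm1.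
by rewrite (eq_imset _ (@perm1 _)) imset_id.
Qed.

Lemma leaf_perm_leaf (s : {perm 'I_n}) (i : 'I_n) :
  s \in autG e -> (i : nat) != 0%N -> (s i : nat) != 0%N.
Proof. by rewrite autG_star => /eqP s0; rewrite centre_fixed_eq0. Qed.

Lemma orbit_leaf (x : 'I_n) : (x : nat) != 0%N ->
  pair_orbit e [set x] = pair_orbit e [set leaf1].
Proof.
move=> x_leaf; rewrite -(pair_orbit_shift _ (autG_tperm x_leaf leaf1_neq0)).
by rewrite imset_set1 tpermL.
Qed.

Lemma orbit_centre_leaf (z : 'I_n) : (z : nat) != 0%N ->
  pair_orbit e [set ord0; z] = pair_orbit e [set ord0; leaf1].
Proof.
move=> z_leaf; rewrite -(pair_orbit_shift _ (autG_tperm z_leaf leaf1_neq0)).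
by rewrite imsetU1 imset_set1 tpermL tpermD // -val_eqE /= eq_sym.
Qed.

Lemma orbit_two_leaves (x y : 'I_n) : (x : nat) != 0%N -> (y : nat) != 0%N -> x != y ->
  pair_orbit e [set x; y] = pair_orbit e [set leaf1; leaf2].
Proof.
move=> x_leaf y_leaf xy; have t_aut := autG_tperm x_leaf leaf1_neq0.
rewrite -(pair_orbit_shift _ t_aut) imsetU1 imset_set1 tpermL.
set y' := tperm x leaf1 y.
have y'_leaf : (y' : nat) != 0%N by apply: leaf_perm_leaf.
have y'_neq : leaf1 != y' by rewrite /y' -{1}(tpermL x leaf1) (inj_eq perm_inj).
rewrite -(pair_orbit_shift _ (autG_tperm y'_leaf leaf2_neq0)).
by rewrite imsetU1 imset_set1 tpermL tpermD 1?eq_sym // -val_eqE.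
Qed.

Definition orbit_rep (k : nat) : {set 'I_n} :=
  match k with
  | 0 => [set ord0] | 1 => [set leaf1] | 2 => [set ord0; leaf1] | _ => [set leaf1; leaf2]
  end.

Lemma orbit_rep_invariants k : (k < 4)%N ->
  (ord0 \in orbit_rep k) = ~~ odd k /\ #|orbit_rep k| = (k./2).+1.
Proof. by case: k => [|[|[|[|k]]]] //= _; rewrite ?cards1 ?cards2 ?inE. Qed.

Lemma pair_orbit_rep (S : {set 'I_n}) : S \in upairs n ->
  exists2 k, (k < 4)%N & pair_orbit e S = pair_orbit e (orbit_rep k).
Proof.
rewrite inE => /andP [S_gt0 S_le2].
have [/cards1P [x ->] | /cards2P [x [y [xy ->]]]] : #|S| == 1%N \/ #|S| == 2%N by lia.
  have [x0 | x_leaf] := eqVneq (x : nat) 0%N; last by exists 1%N; rewrite //= orbit_leaf.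
  by exists 0%N => //=; congr (pair_orbit _ [set _]); apply: val_inj.
have [x0 | x_leaf] := eqVneq (x : nat) 0%N.
  have -> : x = ord0 by apply: val_inj.
  exists 2%N; rewrite //= orbit_centre_leaf //; apply: contraNneq xy => y0.
  by apply/eqP/val_inj; rewrite /= x0 y0.
have [y0 | y_leaf] := eqVneq (y : nat) 0%N.
  have -> : y = ord0 by apply: val_inj.
  by exists 2%N; rewrite //= setUC orbit_centre_leaf.
by exists 3%N; rewrite //= orbit_two_leaves.
Qed.

(* s = 4: the representatives have pairwise distinct invariants. *)
Lemma star_num_orbits : num_pair_orbits e = 4%N.
Proof.
rewrite /num_pair_orbits.
have -> : [set pair_orbit e S | S in upairs n] = [set pair_orbit e (orbit_rep k) | k : 'I_4].
  apply/setP => O; apply/imsetP/imsetP => [[S S_pair ->] | [k _ ->]].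
    by have [k lt_k4 ->] := pair_orbit_rep S_pair; exists (Ordinal lt_k4).
  exists (orbit_rep k) => //; rewrite inE.
  by have [_ ->] := orbit_rep_invariants (ltn_ord k); have := ltn_ord k; lia.
rewrite card_imset ?card_ord // => a b same_orbit.
have := pair_orbit_self (orbit_rep a); rewrite same_orbit => /pair_orbit_invariants [].
have [-> ->] := orbit_rep_invariants (ltn_ord a).
have [-> ->] := orbit_rep_invariants (ltn_ord b).
move=> /negb_inj odd_ab /eq_add_S half_ab; apply/val_inj.
by rewrite /= -[val a]odd_double_half -[val b]odd_double_half odd_ab half_ab.
Qed.
End StarOrbits.

Unset Implicit Arguments.

Theorem mainTheorem7 (C : numClosedFieldType) (n : nat) (hn : (3 <= n)%N) :
  num_distinct_eigs (adj_mx C (star_rel n)) 3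
  /\ num_pair_orbits (star_rel n) = 4%N
  /\ (forall c : linform C n,
        in_recip_ideal (adj_mx C (star_rel n)) c <-> c \in <<star_gens C n>>%VS).
Proof.
case: n hn => [|[|[|m]]] // _.
split; first exact: star_num_eigs.
split; first exact: star_num_orbits.
by move=> c; split; [exact: recip_in_span | exact: span_gens_recip].
Qed.
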